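(* Let $0\le p<1$, let $n,k$ be integers with $1\le k\le n$, and let $\mathcal C_0\subseteq\{0,1\}^n$ be a binary linear maximum distance separable (MDS) code of length $n$ and dimension $n-k$. Consider the coset wiretap coding scheme in which the $2^k$ messages $m\in\mathcal M$ (with $M$ uniform on $\mathcal M$, $|\mathcal M|=2^k$) are put in bijection with the $2^k$ cosets $\mathcal C_0(\mathbf m)$ of $\mathcal C_0$ in $\{0,1\}^n$, and to send message $m$ the encoder transmits a codeword $\mathbf X$ chosen uniformly at random from the coset $\mathcal C_0(\mathbf m)$. Let $\mathbf Z\in\{0,1,2\}^n$ be the eavesdropper's output when $\mathbf X$ is sent over $n$ independent uses of a binary erasure channel with erasure probability $p$. Then \[ d_{TV}\bigl(P_{M,\mathbf Z},\,\mathrm U_{\mathcal M}P_{\mathbf Z}\bigr)\;=\;\sum_{e=0}^{k-1}\Bigl(1-\frac{1}{2^{\,k-e}}\Bigr)\binom{n}{e}p^e(1-p)^{n-e}. \]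
   Context: The binary erasure channel with erasure probability $p$ maps input $x\in\{0,1\}$ to output $x$ with probability $1-p$ and to the erasure symbol $2$ with probability $p$, independently across the $n$ uses. An $[n,n-k]$ linear code is MDS if its minimum Hamming distance equals $k+1$. $d_{TV}(P,Q)=\tfrac12\sum_x|P(x)-Q(x)|$ denotes total variation distance, and $\mathrm U_{\mathcal M}$ is the uniform distribution on $\mathcal M$. *)

From HB Require Import structures.
From mathcomp Require Import all_boot all_order all_algebra.
Set Implicit Arguments. Unset Strict Implicit. Unset Printing Implicit Defensive.
Import Order.TTheory GRing.Theory Num.Theory.
Local Open Scope ring_scope.

Notation word n := 'rV['F_2]_n.

Definition hamming_dist n (x y : word n) : nat :=
  #|[set i : 'I_n | x 0 i != y 0 i]|.

(* Minimum Hamming distance of a code C: minimum over pairs of distinct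
   codewords (convention: n+1 if C has fewer than two codewords). *)
Definition min_dist n (C : {vspace word n}) : nat :=
  \big[minn/n.+1]_(x : word n | x \in C)
    \big[minn/n.+1]_(y : word n | (y \in C) && (y != x)) hamming_dist x y.

Definition is_MDS n k (C : {vspace word n}) : Prop :=
  (\dim C = n - k)%N /\ min_dist C = k.+1.

Definition coset n (C : {vspace word n}) (x : word n) : {set word n} :=
  [set y : word n | y - x \in C].

(* Eavesdropper output alphabet {0,1,2}; 2 is the erasure symbol. *)
Notation out n := {ffun 'I_n -> 'I_3}.

Definition bec {R : ringType} (p : R) (b : 'F_2) (z : 'I_3) : R :=
  if val z == 2%N then p
  else if val z == val b then 1 - p else 0.

Definition becn {R : ringType} n (p : R) (x : word n) (z : out n) : R :=
  \prod_(i < n) bec p (x 0 i) (z i).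

(* Joint law of (M, Z) for the coset scheme: M uniform on 'I_(2^k),
   X uniform on the coset of the representative enc m, Z = BEC^n(X). *)
Definition P_MZ {R : fieldType} n k (p : R) (C : {vspace word n})
    (enc : 'I_(2 ^ k) -> word n) (m : 'I_(2 ^ k)) (z : out n) : R :=
  (2 ^ k)%:R^-1 *
  \sum_(x in coset C (enc m)) (#|coset C (enc m)|%:R^-1 * becn p x z).

Definition P_Z {R : fieldType} n k (p : R) (C : {vspace word n})
    (enc : 'I_(2 ^ k) -> word n) (z : out n) : R :=
  \sum_(m : 'I_(2 ^ k)) P_MZ p C enc m z.

Definition dTV_secrecy {R : realFieldType} n k (p : R) (C : {vspace word n})
    (enc : 'I_(2 ^ k) -> word n) : R :=
  2^-1 * \sum_(m : 'I_(2 ^ k)) \sum_(z : out n)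
     `|P_MZ p C enc m z - (2 ^ k)%:R^-1 * P_Z p C enc z|.

(* For an output z with e erasures, the BEC likelihood of a word x is
   p^e (1-p)^(n-e) when x agrees with z on the unerased positions and 0
   otherwise, so P(m, z) is proportional to the number of words of the coset
   of m consistent with z.  The 2^e consistent words are spread over the 2^k
   cosets; two of them in the same coset differ by a codeword supported on the
   erased positions, and as an MDS code is determined by any n-k coordinates
   there are at most 2^(e-k) such codewords (one if e < k).  Hence for e >= k
   every coset receives 2^(e-k) words and z reveals nothing, while for e < k
   exactly 2^e cosets receive one word each, contributing 1 - 2^(e-k) to the
   distance.  Counting the C(n,e) 2^(n-e) outputs with e erasures gives the
   formula. *)

From HB Require Import structures.
From mathcomp Require Import all_boot all_order all_algebra.
From mathcomp Require Import ring.
Import Order.TTheory GRing.Theory Num.Theory.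
Set Implicit Arguments. Unset Strict Implicit. Unset Printing Implicit Defensive.
Local Open Scope ring_scope.

Lemma prodr_if_card (R : comPzSemiRingType) n (A : {set 'I_n}) (a b : R) :
  \prod_(i < n) (if i \in A then a else b) = a ^+ #|A| * b ^+ (n - #|A|).
Proof.
have -> : (n - #|A| = #|~: A|)%N by rewrite -[n in (n - _)%N]card_ord -(cardsC A) addKn.
rewrite -!prodr_const (bigID (mem A)) /=; congr (_ * _).
  by apply: eq_bigr => i ->.
by apply: eq_big => i; rewrite ?inE // => /negbTE ->.
Qed.

Lemma card_rows_coordwise (F : finType) n (Q : 'I_n -> pred F) :
  #|[set x : 'rV[F]_n | [forall i, Q i (x 0 i)]]| = (\prod_(i < n) #|Q i|)%N.
Proof.
pose row_of (f : {ffun 'I_n -> F}) : 'rV[F]_n := \row_i f i.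
have row_of_bij : bijective row_of.
  exists (fun x : 'rV[F]_n => [ffun i => x 0 i]) => [f|x]; first by apply/ffunP => i; rewrite ffunE mxE.
  by apply/rowP => i; rewrite mxE ffunE.
rewrite -sum1_card big_mkcond (reindex row_of) /=; last exact: onW_bij.
rewrite (eq_bigr (fun f : {ffun 'I_n -> F} => (\prod_(i < n) (Q i (f i) : nat))%N)) => [|f]; last first.
  rewrite inE; under eq_forallb do rewrite mxE.
  case: forallP => [Qf|/forallP/forallPn[i /negbTE Qi]]; first by rewrite big1 // => i _; rewrite Qf.
  by rewrite (bigD1 i) //= Qi.
rewrite [RHS](eq_bigr (fun i => \sum_(b : F) (Q i b : nat))%N).
  by rewrite bigA_distr_bigA.
by move=> i _; rewrite -sum1_card big_mkcond.
Qed.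

Lemma card_sub_set (T : finType) (A : {set T}) d :
  (d <= #|A|)%N -> exists2 B : {set T}, B \subset A & #|B| = d.
Proof.
move=> le_dA; exists [set x in take d (enum A)].
  by apply/subsetP => x; rewrite inE => /mem_take; rewrite mem_enum.
rewrite cardsE (card_uniqP _) ?take_uniq ?enum_uniq // size_take -cardE.
by case: ltnP => // ge_dA; apply/eqP; rewrite eqn_leq ge_dA le_dA.
Qed.

Lemma eq_of_sum_bounded (I : finType) (a : I -> nat) b :
  (forall i, a i <= b)%N -> (\sum_i a i)%N = (#|I| * b)%N -> forall i, a i = b.
Proof.
move=> le_ab sum_a i; apply/eqP; rewrite eqn_leq le_ab /= -subn_eq0.
have : (\sum_i (b - a i) == 0)%N.
  by rewrite sumnB // sum_a sum_nat_const subnn.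
by rewrite sum_nat_eq0 => /forallP /(_ i).
Qed.

Lemma sum_abs_sub_bool (R : realFieldType) (I : finType) (a : I -> nat) (r : R) :
  0 <= r <= 1 -> (forall i, a i <= 1)%N -> #|I|%:R * r = (\sum_i a i)%:R ->
  \sum_i `|(a i)%:R - r| = 2 * (\sum_i a i)%:R * (1 - r).
Proof.
move=> /andP[r_ge0 r_le1] a_le1 sum_a.
rewrite (eq_bigr (fun i => r + (a i)%:R * (1 - 2 * r))) => [|i _]; last first.
  case: (a i) (a_le1 i) => [|[|//]] _; first by rewrite sub0r normrN ger0_norm ?mul0r ?addr0.
  by rewrite ger0_norm ?subr_ge0 //; ring.
rewrite big_split /= sumr_const -[#|xpredT|]/#|I| -[r *+ _]mulr_natl sum_a -mulr_suml natr_sum; ring.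
Qed.

Lemma sumr_nat_of_bool (R : pzSemiRingType) (T : finType) (A : {set T}) (b : pred T) :
  \sum_(x in A) (b x)%:R = #|[set x in A | b x]|%:R :> R.
Proof. by rewrite -sum1dep_card natr_sum big_mkcondr; apply: eq_bigr => x _; case: (b x). Qed.

Lemma invr_natr_expn_subn {R : numFieldType} b e k : (0 < b)%N -> (e <= k)%N ->
  (b ^ (k - e))%:R^-1 = (b ^ e)%:R / (b ^ k)%:R :> R.
Proof.
move=> b_gt0 le_ek; have -> : (b ^ k = b ^ (k - e) * b ^ e)%N by rewrite -expnD subnK.
by rewrite natrM invfM mulrCA mulfV ?mulr1 // pnatr_eq0 -lt0n expn_gt0 b_gt0.
Qed.

Lemma min_dist_le n (C : {vspace word n}) (x y : word n) :
  x \in C -> y \in C -> y != x -> (min_dist C <= hamming_dist x y)%N.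
Proof.
move=> Cx Cy neq_yx.
rewrite /min_dist -Order.NatOrder.minEnat -Order.NatOrder.leEnat.
apply: le_trans (bigmin_le_cond _ _ Cx) _.
by apply: bigmin_le_cond; rewrite Cy neq_yx.
Qed.

Lemma mds_wt_gt n k (C : {vspace word n}) (y : word n) :
  is_MDS k C -> y \in C -> y != 0 -> (k < #|[set i | y 0%R i != 0%R]|)%N.
Proof.
move=> [_ <-] Cy nz_y; rewrite (leq_trans (min_dist_le Cy (rpred0 C) _)) 1?eq_sym //.
by apply: subset_leq_card; apply/subsetP => i; rewrite !inE mxE.
Qed.

Lemma mds_eq_off n k (C : {vspace word n}) (S : {set 'I_n}) (x y : word n) :
  is_MDS k C -> x \in C -> y \in C -> (#|S| <= k)%N ->
  (forall i, i \notin S -> x 0 i = y 0 i) -> x = y.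
Proof.
move=> mdsC Cx Cy le_Sk eq_xy; apply/eqP; rewrite -subr_eq0; apply: contraLR le_Sk.
move=> /(mds_wt_gt mdsC (rpredB Cx Cy)); rewrite -ltnNge => /leq_trans; apply.
apply: subset_leq_card; apply/subsetP => i; rewrite inE !mxE subr_eq0.
by apply: contraR => /eq_xy ->.
Qed.

Definition subcode_on n (C : {vspace word n}) (E : {set 'I_n}) : {set word n} :=
  [set y | (y \in C) && [forall i, (i \notin E) ==> (y 0 i == 0)]].

Lemma card_subcode_on_le n k (C : {vspace word n}) (E : {set 'I_n}) :
  is_MDS k C -> (#|subcode_on C E| <= 2 ^ (#|E| - k))%N.
Proof.
move=> mdsC; have [T sub_TE card_T] := card_sub_set (leq_subr k #|E|).
(* [E :\: T] has at most [k] positions, so restriction to [T] is injective. *)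
pose restr (y : word n) : word n := \row_i (if i \in T then y 0 i else 0).
have restr_inj : {in subcode_on C E &, injective restr}.
  move=> y1 y2; rewrite !inE => /andP[Cy1 /forallP y1E] /andP[Cy2 /forallP y2E] eq_r.
  apply: (mds_eq_off (S := E :\: T) mdsC Cy1 Cy2).
    by rewrite cardsD (setIidPr sub_TE) card_T leq_subLR addnC -leq_subLR.
  move=> i; rewrite inE negb_and negbK => /orP[Ti|nEi].
    by have := congr1 (fun y : word n => y 0 i) eq_r; rewrite !mxE Ti.
  by move: (y1E i) (y2E i); rewrite nEi => /eqP -> /eqP ->.
rewrite -(card_in_imset restr_inj) -card_T.
pose Q (i : 'I_n) : pred 'F_2 := if i \in T then predT else pred1 0.
apply: (leq_trans (n := #|[set x : word n | [forall i, Q i (x 0 i)]]|)).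
  apply: subset_leq_card; apply/subsetP => _ /imsetP[y _ ->]; rewrite inE.
  by apply/forallP => i; rewrite /Q mxE; case: (i \in T) => /=.
rewrite card_rows_coordwise; apply: eq_leq.
rewrite -prod_nat_const [RHS]big_mkcond; apply: eq_bigr => i _ /=.
by rewrite /Q; case: (i \in T); rewrite ?card1 // cardT -cardE card_Fp.
Qed.

Lemma card_coset n (C : {vspace word n}) (a : word n) :
  #|coset C a| = #|[set x : word n | x \in C]|.
Proof.
have -> : coset C a = [set x + a | x in [set x : word n | x \in C]].
  apply/setP => y; rewrite inE; apply/idP/imsetP => [Cya|[x]].
    by exists (y - a); rewrite ?inE ?subrK.
  by rewrite inE => Cx ->; rewrite addrK.
exact/card_imset/addIr.
Qed.

Lemma sum_card_cosets n k (C : {vspace word n}) (enc : 'I_(2 ^ k) -> word n)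
    (P : pred (word n)) :
  (forall x : word n, exists! m : 'I_(2 ^ k), x \in coset C (enc m)) ->
  (\sum_m #|[set x in coset C (enc m) | P x]|)%N = #|[set x | P x]|.
Proof.
move=> enc_bij; rewrite -sum1_card [RHS]big_mkcond /=.
under eq_bigr do rewrite -sum1_card big_mkcond /=.
rewrite exchange_big /=; apply: eq_bigr => x _; rewrite inE.
under eq_bigr do rewrite inE.
have [m [Cm uniq_m]] := enc_bij x.
rewrite (bigD1 m) //= Cm big1 ?addn0 => [|m' neq_m'm]; first by case: (P x).
by case: ifP => // /andP[/uniq_m eq_m' _]; rewrite eq_m' eqxx in neq_m'm.
Qed.

Definition erasures n (z : out n) : {set 'I_n} := [set i | val (z i) == 2%N].

Definition consistent n (z : out n) (x : word n) : bool :=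
  [forall i, (i \notin erasures z) ==> (val (z i) == val (x 0 i))].

Lemma becn_consistent (R : comNzRingType) n (p : R) (x : word n) (z : out n) :
  becn p x z =
  p ^+ #|erasures z| * (1 - p) ^+ (n - #|erasures z|) * (consistent z x)%:R.
Proof.
rewrite -prodr_if_card /becn; have [/forallP cons_x|] := boolP (consistent z x).
  rewrite mulr1; apply: eq_bigr => i _; rewrite /bec inE.
  case: ifP => // /negbT nEi.
  by move/implyP: (cons_x i); rewrite inE nEi => /(_ isT)/eqP ->; rewrite eqxx.
case/forallPn => i; rewrite negb_imply inE => /andP[/negbTE nEi /negbTE neq_zx].
by rewrite mulr0 (bigD1 i) //= /bec nEi neq_zx mul0r.
Qed.

Lemma card_consistent n (z : out n) :
  #|[set x : word n | consistent z x]| = (2 ^ #|erasures z|)%N.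
Proof.
pose Q (i : 'I_n) : pred 'F_2 := fun b => (i \notin erasures z) ==> (val (z i) == val b).
have -> : [set x : word n | consistent z x] = [set x : word n | [forall i, Q i (x 0 i)]].
  by apply/setP => x; rewrite !inE.
rewrite card_rows_coordwise -prod_nat_const [RHS]big_mkcond; apply: eq_bigr => i _ /=.
rewrite /Q inE; case: (z i) => [[|[|[|j]]] lt_j3] //=.
- by apply: (@eq_card1 _ 0) => b; rewrite !inE; case: b => [[|[|b]] ?].
- by apply: (@eq_card1 _ 1) => b; rewrite !inE; case: b => [[|[|b]] ?].
- by rewrite cardT -cardE card_Fp.
Qed.

Lemma card_coset_consistent_le n (C : {vspace word n}) (a : word n) (z : out n) :
  (#|[set x in coset C a | consistent z x]| <= #|subcode_on C (erasures z)|)%N.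
Proof.
set A := [set x in coset C a | consistent z x].
have [->|[x0 Ax0]] := set_0Vmem A; first by rewrite cards0.
rewrite -(card_in_imset (f := fun x => x - x0)) => [|x y _ _]; last exact: addIr.
apply/subset_leq_card/subsetP => _ /imsetP[x Ax ->].
move: Ax Ax0; rewrite !inE => /andP[Cx /forallP cons_x] /andP[Cx0 /forallP cons_x0].
have -> : x - x0 = (x - a) - (x0 - a) by rewrite opprB addrA subrK.
rewrite rpredB //=; apply/forallP => i; apply/implyP => nEi.
move/implyP/(_ nEi)/eqP: (cons_x i); move/implyP/(_ nEi)/eqP: (cons_x0 i).
by rewrite !mxE subr_eq0 => zx0 zx; apply/eqP/val_inj; rewrite /= -zx -zx0.
Qed.

Lemma card_erasures_lt n (z : out n) : (#|erasures z| < n.+1)%N.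
Proof. by rewrite ltnS -[leqRHS]card_ord max_card. Qed.

Lemma card_outputs_erasures n e : (e <= n)%N ->
  #|[set z : out n | #|erasures z| == e]| = ('C(n, e) * 2 ^ (n - e))%N.
Proof.
move=> le_en; apply/eqP; rewrite -(eqr_nat int); apply/eqP.
(* The count is the coefficient of X^e in (2 + X)^n. *)
pose P : {poly int} := \sum_(z : out n) 'X^#|erasures z|.
have -> : #|[set z : out n | #|erasures z| == e]|%:R = P`_e.
  rewrite coef_sum -sum1_card natr_sum [LHS]big_mkcond /=; apply: eq_bigr => z _.
  by rewrite coefXn inE eq_sym; case: eqP.
have -> : P = (2%:P + 'X) ^+ n.
  transitivity (\sum_(z : out n) \prod_(i < n) (if val (z i) == 2%N then 'X else 1 : {poly int})).
    apply: eq_bigr => z _; rewrite (eq_bigr (fun i => if i \in erasures z then 'X else 1)).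
      by rewrite prodr_if_card expr1n mulr1.
    by move=> i _; rewrite inE.
  rewrite -(bigA_distr_bigA (fun _ (j : 'I_3) => if val j == 2%N then 'X else 1)) /=.
  by rewrite prodr_const card_ord !big_ord_recr big_ord0 /= add0r polyC_natr mulr2n.
rewrite exprDn coef_sum (bigD1 (Ordinal (le_en : e < n.+1)%N)) //= big1 => [|i neq_ie].
  by rewrite addr0 coefMn -rmorphXn coefCM coefXn eqxx mulr1 natrM natrX mulr_natl.
have ne_ei : (e == i) = false by apply: contraNF neq_ie => /eqP ei; apply/eqP/val_inj.
by rewrite coefMn -rmorphXn coefCM coefXn ne_ei mulr0 mul0rn.
Qed.

Lemma sum_outputs_by_erasures (V : nmodType) n (G : nat -> V) :
  \sum_(z : out n) G #|erasures z| =
  \sum_(e < n.+1) G e *+ ('C(n, e) * 2 ^ (n - e)).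
Proof.
rewrite (partition_big (fun z : out n => Ordinal (card_erasures_lt z)) xpredT) //=.
apply: eq_bigr => e _; rewrite (eq_bigr (fun=> G e)) => [|z /eqP <- //].
rewrite sumr_const -card_outputs_erasures; last by rewrite -ltnS.
congr (_ *+ _).
by apply: eq_card => z; rewrite inE.
Qed.

Section CosetScheme.

Variables (R : realFieldType) (p : R) (n k : nat).
Variables (C0 : {vspace word n}) (enc : 'I_(2 ^ k) -> word n).
Hypotheses (p_ge0 : 0 <= p) (p_le1 : p <= 1) (mds_C0 : is_MDS k C0).
Hypothesis enc_bij : forall x : word n, exists! m : 'I_(2 ^ k), x \in coset C0 (enc m).

Local Notation pattern_prob z :=
  (p ^+ #|erasures z| * (1 - p) ^+ (n - #|erasures z|)).
Local Notation hits z m := #|[set x in coset C0 (enc m) | consistent z x]|.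

Lemma card_code_mul : (2 ^ k * #|[set x : word n | x \in C0]| = 2 ^ n)%N.
Proof.
have := sum_card_cosets predT enc_bij.
rewrite (eq_bigr (fun=> #|[set x : word n | x \in C0]|)) => [|m _]; last first.
  by rewrite -(card_coset C0 (enc m)); apply: eq_card => x; rewrite !inE andbT.
by rewrite sum_nat_const card_ord => ->; rewrite cardsT card_mx card_Fp // mul1n.
Qed.

Lemma P_MZ_eq m z :
  P_MZ p C0 enc m z = pattern_prob z / (2 ^ n)%:R * (hits z m)%:R.
Proof.
rewrite /P_MZ card_coset; under eq_bigr do rewrite becn_consistent.
rewrite -!mulr_sumr sumr_nat_of_bool -card_code_mul natrM invfM; ring.
Qed.

Lemma P_Z_eq z :
  P_Z p C0 enc z = pattern_prob z / (2 ^ n)%:R * (2 ^ #|erasures z|)%:R.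
Proof.
rewrite /P_Z; under eq_bigr do rewrite P_MZ_eq.
by rewrite -mulr_sumr -natr_sum sum_card_cosets // card_consistent.
Qed.

Lemma sum_abs_sub_hits z :
  \sum_m `|(hits z m)%:R - (2 ^ k)%:R^-1 * (2 ^ #|erasures z|)%:R| =
  if (#|erasures z| < k)%N
  then 2 * (2 ^ #|erasures z|)%:R * (1 - (2 ^ (k - #|erasures z|))%:R^-1) else 0 :> R.
Proof.
set e := #|erasures z|.
have sum_hits : (\sum_m hits z m)%N = (2 ^ e)%N by rewrite sum_card_cosets // card_consistent.
have hits_le m : (hits z m <= 2 ^ (e - k))%N.
  exact: leq_trans (card_coset_consistent_le _ _ _) (card_subcode_on_le _ mds_C0).
case: ltnP => [lt_ek|le_ke].
  rewrite [_^-1 * _]mulrC -(invr_natr_expn_subn _ (ltnW lt_ek)) // -sum_hits.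
  apply: sum_abs_sub_bool.
  - by rewrite invr_ge0 ler0n invf_le1 ?ler1n ?ltr0n ?expn_gt0.
  - by move=> m; have := hits_le m; rewrite (eqP (ltnW lt_ek)).
  - rewrite card_ord sum_hits (invr_natr_expn_subn _ (ltnW lt_ek)) //.
    by rewrite mulrCA mulfV ?mulr1 // pnatr_eq0 expn_eq0.
have eq_hits := eq_of_sum_bounded hits_le.
rewrite big1 // => m _; rewrite eq_hits; last by rewrite sum_hits card_ord -expnD subnKC.
have -> : (2 ^ e = 2 ^ k * 2 ^ (e - k))%N by rewrite -expnD subnKC.
by rewrite natrM mulKf ?subrr ?normr0 // pnatr_eq0 expn_eq0.
Qed.

Lemma secrecy_term z :
  2^-1 * \sum_m `|P_MZ p C0 enc m z - (2 ^ k)%:R^-1 * P_Z p C0 enc z| =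
  (if (#|erasures z| < k)%N
   then (1 - (2 ^ (k - #|erasures z|))%:R^-1) * ((2 ^ #|erasures z|)%:R / (2 ^ n)%:R)
   else 0) * pattern_prob z.
Proof.
have scale_ge0 : 0 <= pattern_prob z / (2 ^ n)%:R.
  by rewrite !mulr_ge0 ?exprn_ge0 ?subr_ge0 ?invr_ge0 ?ler0n.
rewrite (eq_bigr (fun m => pattern_prob z / (2 ^ n)%:R *
    `|(hits z m)%:R - (2 ^ k)%:R^-1 * (2 ^ #|erasures z|)%:R|)) => [|m _]; last first.
  by rewrite P_MZ_eq P_Z_eq -[X in X * `|_|]ger0_norm // -normrM; congr `|_|; ring.
rewrite -mulr_sumr sum_abs_sub_hits; case: ifP => _; last by rewrite !mulr0 mul0r.
by field; rewrite !pnatr_eq0 !expn_eq0.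
Qed.

End CosetScheme.

Unset Implicit Arguments.

Theorem theorem2 (R : realFieldType) (p : R) (n k : nat)
    (C0 : {vspace 'rV['F_2]_n}) (enc : 'I_(2 ^ k) -> 'rV['F_2]_n) :
  0 <= p -> p < 1 -> (1 <= k)%N -> (k <= n)%N ->
  is_MDS k C0 ->
  (forall x : 'rV['F_2]_n, exists! m : 'I_(2 ^ k), x \in coset C0 (enc m)) ->
  dTV_secrecy p C0 enc =
  \sum_(0 <= e < k) (1 - (2 ^ (k - e))%:R^-1) * ('C(n, e))%:R
                      * p ^+ e * (1 - p) ^+ (n - e).
Proof.
move=> p_ge0 /ltW p_le1 _ le_kn mds_C0 enc_bij.
rewrite /dTV_secrecy exchange_big mulr_sumr /=.
under eq_bigr do rewrite secrecy_term //.
pose leak e := (if (e < k)%N then (1 - (2 ^ (k - e))%:R^-1) * ((2 ^ e)%:R / (2 ^ n)%:R) else 0)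
  * (p ^+ e * (1 - p) ^+ (n - e)).
rewrite (sum_outputs_by_erasures _ leak) (big_nat_widen 0 k n.+1 xpredT _ (leqW le_kn)).
rewrite [RHS]big_mkcond [RHS]big_mkord; apply: eq_bigr => e _ /=; rewrite /leak.
case: ltnP => [lt_ek|_]; last by rewrite !mul0r mul0rn.
have le_en : (e <= n)%N := leq_trans (ltnW lt_ek) le_kn.
have -> : (2 ^ n = 2 ^ e * 2 ^ (n - e))%N by rewrite -expnD subnKC.
by rewrite -mulr_natr !natrM; field; rewrite !pnatr_eq0 !expn_eq0.
Qed.
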